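(* Let $S\subseteq Q$ be nonempty and let $c$ be a joint choice on $\mathfrak{M}_Q\subseteq\prod_{q\in Q}2^{X_q}$. If $c$ is $S$-separable and rationalizable, and $\mathfrak{M}_Q$ is $S$-rich, then the revealed joint preference $\succsim^c$ on $\prod_{q\in Q}X_q$ is $S$-separable.
   Context: Let $Q=\{1,\dots,n\}$ with $n\ge 2$ be a finite set of dimensions. For each $q\in Q$, $X_q$ is a nonempty finite set, and $2^{X_q}$ denotes the family of nonempty subsets of $X_q$. A (multidimensional) menu is a tuple $A_Q=(A_q)_{q\in Q}\in\prod_{q\in Q}2^{X_q}$; its alternatives are the elements $x_Q=(x_q)_{q\in Q}$ of $\prod_{q\in Q}A_q$, and we write $x_Q\in A_Q$ for $x_Q\in\prod_{q\in Q}A_q$. Let $\mathfrak{M}_Q\subseteq\prod_{q\in Q}2^{X_q}$ be a nonempty family of menus. A joint choice on $\mathfrak{M}_Q$ is a map $c$ assigning to each $A_Q\in\mathfrak{M}_Q$ a set $c(A_Q)$ with $\emptyset\neq c(A_Q)\subseteq\prod_{q\in Q}A_q$. For nonempty $S\subseteq Q$, write $-S=Q\setminus S$, $x_S=(x_q)_{q\in S}$, $(x_S,u_{-S})$ for the alternative with components $x_q$ ($q\in S$) and $u_q$ ($q\in -S$), and $\pi_S$ for the projection $x_Q\mapsto x_S$, extended to sets of alternatives by taking images and to menus by $\pi_S(A_Q)=A_S:=(A_q)_{q\in S}$; $\pi_S(\mathfrak{M}_Q)=\{\pi_S(A_Q):A_Q\in\mathfrak{M}_Q\}$; $(A_S,B_{-S})$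 is the menu with $q$-component $A_q$ for $q\in S$ and $B_q$ for $q\in -S$. A joint choice $c$ is $S$-separable if $\pi_S(c(A_S,B_{-S}))=\pi_S(c(A_S,C_{-S}))$ for all $A_S\in\pi_S(\mathfrak{M}_Q)$, $B_{-S},C_{-S}\in\pi_{-S}(\mathfrak{M}_Q)$ with $(A_S,B_{-S}),(A_S,C_{-S})\in\mathfrak{M}_Q$ (vacuous for $S=Q$). For a binary relation $\succsim$ on $\prod_{q\in Q}X_q$, let $\succ$ be its asymmetric part ($x\succ y$ iff $x\succsim y$ and not $y\succsim x$) and $\max(A_Q,\succsim)=\{x_Q\in A_Q:\text{there is no }y_Q\in A_Q\text{ with }y_Q\succ x_Q\}$. The revealed joint preference of $c$ is the relation $\succsim^c$ on $\prod_{q\in Q}X_q$ given by $x_Q\succsim^c y_Q$ iff there is $B_Q\in\mathfrak{M}_Q$ with $x_Q\in c(B_Q)$ and $y_Q\in B_Q$. The joint choice $c$ is rationalizable if $c(A_Q)=\max(A_Q,\succsim^c)$ for every $A_Q\in\mathfrak{M}_Q$. A binary relation $\succsim$ on $\prod_{q\in Q}X_q$ is $S$-separable if for all $x_S,y_S\in\prod_{q\in S}X_q$: if $(x_S,u_{-S})\succsim(y_S,u_{-S})$ for some $u_{-S}\in\prod_{q\in -S}X_q$, then $(x_S,v_{-S})\succsim(y_S,v_{-S})$ for all $v_{-S}\in\prod_{q\in -S}X_q$. The family $\mathfrak{M}_Q$ is $S$-rich if whenever some $A_Q\in\mathfrak{M}_Q$ contains both $(x_S,u_{-S})$ and $(y_S,u_{-S})$,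 then for every $v_{-S}\in\prod_{q\in -S}X_q$ the menu whose $q$-component is $\{x_q,y_q\}$ for $q\in S$ and $\{v_q\}$ for $q\in -S$ belongs to $\mathfrak{M}_Q$. *)

From mathcomp Require Import all_boot.
Set Implicit Arguments. Unset Strict Implicit. Unset Printing Implicit Defensive.

(* Dimensions Q = 'I_n; X q : finType for each dimension q.
   A menu is a tuple of subsets A : forall q, {set X q}
   (nonemptiness of the components is imposed on the family of menus). *)

Section Defs.
Variable n : nat.
Variable X : 'I_n -> finType.

Definition alt := forall q : 'I_n, X q.
Definition menu := forall q : 'I_n, {set X q}.

Definition in_menu (x : alt) (A : menu) : Prop := forall q, x q \in A q.

Definition mix (S : {set 'I_n}) (x u : alt) : alt :=
  fun q => if q \in S then x q else u q.

Definition mix_menu (S : {set 'I_n}) (A B : menu) : menu :=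
  fun q => if q \in S then A q else B q.

Definition menu_family (M : menu -> Prop) : Prop :=
  (exists A, M A) /\ (forall A, M A -> forall q, A q != set0).

Definition joint_choice (M : menu -> Prop) (c : menu -> alt -> Prop) : Prop :=
  forall A, M A -> (exists x, c A x) /\ (forall x, c A x -> in_menu x A).

(* pi_S(c(A_S,B_{-S})) = pi_S(c(A_S,C_{-S})) for all admissible A_S, B_{-S}, C_{-S};
   equality of the projected sets is written out as mutual inclusion. *)
Definition choice_separable (S : {set 'I_n}) (M : menu -> Prop)
    (c : menu -> alt -> Prop) : Prop :=
  forall A B C : menu,
    M (mix_menu S A B) -> M (mix_menu S A C) ->
    (forall x, c (mix_menu S A B) x ->
       exists y, c (mix_menu S A C) y /\ (forall q, q \in S -> y q = x q)) /\
    (forall y, c (mix_menu S A C) y ->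
       exists x, c (mix_menu S A B) x /\ (forall q, q \in S -> x q = y q)).

Definition strict (R : alt -> alt -> Prop) (x y : alt) : Prop := R x y /\ ~ R y x.

Definition maxset (A : menu) (R : alt -> alt -> Prop) (x : alt) : Prop :=
  in_menu x A /\ ~ (exists y, in_menu y A /\ strict R y x).

Definition revealed (M : menu -> Prop) (c : menu -> alt -> Prop) (x y : alt) : Prop :=
  exists B, M B /\ c B x /\ in_menu y B.

Definition rationalizable (M : menu -> Prop) (c : menu -> alt -> Prop) : Prop :=
  forall A, M A -> forall x, c A x <-> maxset A (revealed M c) x.

(* S-separable binary relation; x_S, y_S are given as S-parts of full alternatives *)
Definition rel_separable (S : {set 'I_n}) (R : alt -> alt -> Prop) : Prop :=
  forall x y u : alt, R (mix S x u) (mix S y u) ->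
    forall v : alt, R (mix S x v) (mix S y v).

Definition rich (S : {set 'I_n}) (M : menu -> Prop) : Prop :=
  forall (A : menu) (x y u : alt),
    M A -> in_menu (mix S x u) A -> in_menu (mix S y u) A ->
    forall v : alt,
      M (fun q => if q \in S then [set x q; y q] else [set v q]).

End Defs.

From Pilot Require Import Defs.
From mathcomp Require Import all_boot.
From Stdlib Require Import FunctionalExtensionality.

Set Implicit Arguments.
Unset Strict Implicit.
Unset Printing Implicit Defensive.

(* If [(x_S, u_{-S})] is revealed preferred to [(y_S, u_{-S})] through a menu [B], it
   is chosen, hence maximal, in [B]; so it stays maximal, hence chosen, in the
   smaller rich menu [({x_q, y_q}_S, {u_q}_{-S})].  Separability of [c] transports
   this choice to [({x_q, y_q}_S, {v_q}_{-S})], where the only alternative with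
   [S]-part [x_S] is [(x_S, v_{-S})]; since [(y_S, v_{-S})] also lies in that menu,
   [(x_S, v_{-S})] is revealed preferred to it. *)

Section RevealedSeparable.
Variables (n : nat) (X : 'I_n -> finType).

Implicit Types (A B : menu X) (x y u v z : alt X) (S : {set 'I_n}).

Definition sub_menu A B := forall q, A q \subset B q.

Lemma in_sub_menu A B x : sub_menu A B -> in_menu x A -> in_menu x B.
Proof. by move=> AB xA q; apply: subsetP (AB q) _ (xA q). Qed.

(* [Defs.] is needed: finset's [maxset] shadows the maximal-element set of [Defs]. *)
Lemma maxset_sub_menu A B (R : alt X -> alt X -> Prop) x :
  sub_menu A B -> in_menu x A -> Defs.maxset B R x -> Defs.maxset A R x.
Proof.
move=> AB xA [_ no_better]; split=> // -[y [yA Ryx]].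
by apply: no_better; exists y; split=> //; apply: in_sub_menu yA.
Qed.

Lemma rationalizable_chosen_sub M c A B x :
  rationalizable M c -> M A -> M B -> sub_menu A B -> in_menu x A ->
  c B x -> c A x.
Proof.
move=> rat MA MB AB xA /(rat B MB) xmax.
by apply/(rat A MA); apply: maxset_sub_menu xmax.
Qed.

Definition pair_menu S x y v : menu X :=
  fun q => if q \in S then [set x q; y q] else [set v q].

Lemma pair_menu_mixl S x y v : in_menu (mix S x v) (pair_menu S x y v).
Proof. by move=> q; rewrite /pair_menu /mix; case: ifP; rewrite ?set21 ?set11. Qed.

Lemma pair_menu_mixr S x y v : in_menu (mix S y v) (pair_menu S x y v).
Proof. by move=> q; rewrite /pair_menu /mix; case: ifP; rewrite ?set22 ?set11. Qed.

Lemma pair_menu_sub S x y u B :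
  in_menu (mix S x u) B -> in_menu (mix S y u) B -> sub_menu (pair_menu S x y u) B.
Proof.
move=> xB yB q; have := xB q; have := yB q; rewrite /pair_menu /mix.
case: ifP => _ yq xq; apply/subsetP => w; rewrite !inE; last by move/eqP->.
by case/orP=> /eqP->.
Qed.

Lemma pair_menu_mix_eq S x y v z :
  in_menu z (pair_menu S x y v) -> (forall q, q \in S -> z q = x q) -> z = mix S x v.
Proof.
move=> zD zS; apply: functional_extensionality_dep => q; rewrite /mix.
case: ifP => qS; first exact: zS.
by have := zD q; rewrite /pair_menu qS inE => /eqP.
Qed.

Lemma choice_separable_pair_menu S M c x y u v :
  choice_separable S M c -> joint_choice M c ->
  M (pair_menu S x y u) -> M (pair_menu S x y v) ->
  c (pair_menu S x y u) (mix S x u) -> c (pair_menu S x y v) (mix S x v).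
Proof.
move=> sep jc Mu Mv cxu.
have [transport _] := sep (fun q => [set x q; y q]) (fun q => [set u q])
  (fun q => [set v q]) Mu Mv.
have [z [cz zS]] := transport _ cxu.
suff -> : mix S x v = z by [].
apply/esym/pair_menu_mix_eq; first exact: (jc _ Mv).2 z cz.
by move=> q qS; rewrite zS // /mix qS.
Qed.

End RevealedSeparable.

Theorem mainTheorem9 (n : nat) (X : 'I_n -> finType)
    (S : {set 'I_n}) (M : menu X -> Prop) (c : menu X -> alt X -> Prop) :
  2 <= n ->
  (forall q, 0 < #|X q|) ->
  S != set0 ->
  menu_family M ->
  joint_choice M c ->
  choice_separable S M c ->
  rationalizable M c ->
  rich S M ->
  rel_separable S (revealed M c).
Proof.
move=> _ _ _ _ jc sep rat rch x y u [B [MB [cxB yB]]] v.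
have xB : in_menu (mix S x u) B := (jc B MB).2 _ cxB.
have Mpair (w : alt X) : M (pair_menu S x y w) := rch B x y u MB xB yB w.
have cxu : c (pair_menu S x y u) (mix S x u).
  apply: rationalizable_chosen_sub rat (Mpair u) MB _ _ cxB.
    exact: pair_menu_sub.
  exact: pair_menu_mixl.
exists (pair_menu S x y v); split; first exact: Mpair.
split; last exact: pair_menu_mixr.
exact: choice_separable_pair_menu sep jc (Mpair u) (Mpair v) cxu.
Qed.
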